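(* For every integer $r\geq 3$ and every integer $n>6^r$, there exists a collection of $n$ matchings, each of size $n+\frac{1}{12r}n^{\frac{r-1}{r}}-1$, in an $r$-partite $r$-uniform hypergraph that does not admit a rainbow matching of size $n$.
   Context: A hypergraph is $r$-uniform if every edge contains exactly $r$ vertices. An $r$-uniform hypergraph is $r$-partite if its vertex set can be partitioned into $r$ sets $V_1,\dots,V_r$ such that every edge contains exactly one vertex from each $V_i$. A matching is a set of pairwise vertex-disjoint edges. Given a collection (repetitions allowed) of matchings $M_1,\dots,M_n$ in a hypergraph, a matching $M\subseteq \bigcup_{i=1}^n M_i$ is rainbow if there is an injection $\phi:M\to[n]$ such that every edge $e\in M$ belongs to $M_{\phi(e)}$. *)

From mathcomp Require Import all_boot.
From Stdlib Require Import Reals.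
Set Implicit Arguments. Unset Strict Implicit. Unset Printing Implicit Defensive.

(* An r-partite r-uniform hypergraph with parts V_1..V_r, each (w.l.o.g.)
   a copy of 'I_N: the vertex set is 'I_r x 'I_N, part i being {i} x 'I_N,
   and an edge is given by choosing one vertex e i in each part i. *)
Definition edge (r N : nat) := {ffun 'I_r -> 'I_N}.

(* A matching: pairwise vertex-disjoint edges (distinct edges share no vertex;
   two edges can only share a vertex inside a common part). *)
Definition is_matching (r N : nat) (M : {set edge r N}) : Prop :=
  forall e f, e \in M -> f \in M -> e <> f -> forall i, e i <> f i.

Definition is_rainbow (r N n : nat) (Ms : 'I_n -> {set edge r N})
    (M : {set edge r N}) : Prop :=
  is_matching M /\
  exists phi : edge r N -> 'I_n,
    {in M &, injective phi} /\ (forall e, e \in M -> e \in Ms (phi e)).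

(* Let M be the integer r-th root of n and q = n / (12 r M).  Every matching has
   n + q edges, indexed by the points of a torus U = Z_2M x Z_N plus fewer than
   2M padding slots.  The first matchings consist of the constant edges
   (u, u, ..., u), the others, about |U|/2 of them, of the edges
   (g_0 u, g_1 u, ..., g_(r-1) u) for fixed permutations g_i of U with g_0 = id.
   A rainbow matching of size n would use a set S of about |U|/2 points for the
   edges of the second kind, and the remaining constant edges must avoid the
   g_i(S); this leaves room for at most q points of U outside S in the union of
   the g_i(S).  That contradicts an isoperimetric inequality for the g_i: any two
   points are joined by a walk of length about r M along the g_i (the second
   coordinate is corrected digit by digit in base M + 1, and g_(r-1) moves by a
   different power of M + 1 on the two halves of U, so that the r - 2
   generators g_2, ..., g_(r-1) cover r - 1 digits), and at each time the
   position determines the pair up to |U| choices, whence |S| |U \ S| <= (length) |U| max_i |g_i(S) \ S|. *)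

From mathcomp Require Import all_boot zify.
Set Implicit Arguments. Unset Strict Implicit. Unset Printing Implicit Defensive.

Lemma card_bigcup_le (I T : finType) (P : pred I) (E : I -> {set T}) :
  #|\bigcup_(i | P i) E i| <= \sum_(i | P i) #|E i|.
Proof.
elim/big_rec2: _ => [|i n A _ IH]; first by rewrite cards0.
by rewrite (leq_trans (leq_card_setU _ _)) ?leq_add2l.
Qed.

Lemma card_set_sum (T1 T2 : finType) (X : {set T1 + T2}) :
  #|X| = #|inl @^-1: X| + #|inr @^-1: X|.
Proof.
rewrite -!sum1_card [LHS]big_mkcond big_sumType /=.
by congr (_ + _); rewrite [RHS]big_mkcond; apply: eq_bigr => x _; rewrite inE.
Qed.

Lemma card_preimset_inj (aT rT : finType) (f : aT -> rT) (E : {set rT}) :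
  injective f -> #|f @^-1: E| = #|E :&: f @: setT|.
Proof.
move=> f_inj; rewrite -(card_imset _ f_inj); apply: eq_card => e.
rewrite !inE; apply/imsetP/andP => [[x + ->]|[eE /imsetP [x _ ex]]].
  by rewrite inE => fxE; split; last exact: imset_f.
by exists x; rewrite // inE -ex.
Qed.

Lemma card_ord_ltn n a : a <= n -> #|[set i : 'I_n | i < a]| = a.
Proof.
move=> le_an; have -> : [set i : 'I_n | i < a] = widen_ord le_an @: setT.
  apply/setP => i; rewrite !inE; apply/idP/imsetP => [lt_ia|[j _ ->]].
    by exists (Ordinal lt_ia) => //; apply: val_inj.
  exact: (ltn_ord j).
by rewrite card_imset ?cardsT ?card_ord // => j k /(congr1 val) /= /val_inj.
Qed.

Lemma leq_card_index_part (T : finType) n (E A : {set T}) (phi : T -> 'I_n)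
    (J : {set 'I_n}) :
  {in E &, injective phi} -> #|E| = n ->
  (forall e, e \in E -> phi e \in J -> e \in A) -> #|J| <= #|E :&: A|.
Proof.
move=> phi_inj card_E EA.
have phiE : phi @: E = setT.
  by apply/eqP; rewrite eqEcard subsetT cardsT card_ord (card_in_imset phi_inj) card_E leqnn.
apply: leq_trans (leq_imset_card phi _); apply: subset_leq_card; apply/subsetP => i iJ.
have /imsetP [e eE ei] : i \in phi @: E by rewrite phiE inE.
by rewrite ei imset_f // inE eE EA -?ei.
Qed.

Lemma rainbow_card_split (T : finType) n a (A B E : {set T}) (phi : T -> 'I_n) :
  a <= n -> [disjoint A & B] -> {in E &, injective phi} -> #|E| = n ->
  (forall e, e \in E -> e \in (if phi e < a then A else B)) ->
  #|E :&: A| = a /\ #|E :&: B| = n - a.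
Proof.
move=> le_an AB phi_inj card_E EAB.
have geA : a <= #|E :&: A|.
  rewrite -(card_ord_ltn le_an); apply: (leq_card_index_part (phi := phi)) => // e eE.
  by rewrite inE => lt_a; have := EAB e eE; rewrite lt_a.
have geB : n - a <= #|E :&: B|.
  have <- : #|~: [set i : 'I_n | i < a]| = n - a.
    by have := cardsC [set i : 'I_n | i < a]; rewrite card_ord_ltn // card_ord; lia.
  apply: (leq_card_index_part (phi := phi)) => // e eE.
  by rewrite !inE => /negbTE ge_a; have := EAB e eE; rewrite ge_a.
have : #|E :&: A| + #|E :&: B| <= n.
  rewrite -card_E -cardsUI setIACA setIid (disjoint_setI0 AB) setI0 cards0 addn0.
  by rewrite -setIUr subset_leq_card ?subsetIl.
lia.
Qed.

Lemma exists_exit (T : finType) (S : {set T}) (f : nat -> T) D :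
  f 0 \in S -> f D \notin S -> exists2 k, k < D & (f k \in S) && (f k.+1 \notin S).
Proof.
move=> f0S; elim: D => [|D IH] fDS; first by rewrite f0S in fDS.
case fD: (f D \in S); first by exists D; rewrite ?fD.
by have [k kD fk] := IH (negbT fD); exists k; first exact: ltnW.
Qed.

Lemma modn_expn_digits b L d :
  0 < b -> d %% b ^ L = \sum_(j < L) (d %/ b ^ j %% b) * b ^ j.
Proof.
move=> b_gt0; elim: L => [|L IH]; first by rewrite big_ord0 expn0 modn1.
rewrite big_ord_recr /= -IH.
have dE : d = d %/ b ^ L.+1 * b ^ L.+1 + (d %/ b ^ L %% b * b ^ L + d %% b ^ L).
  rewrite {1}(divn_eq d (b ^ L)) {1}(divn_eq (d %/ b ^ L) b).
  by rewrite expnSr divnMA; nia.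
rewrite {1}dE modnMDl modn_small; first by rewrite addnC.
have := ltn_mod d (b ^ L); have := ltn_mod (d %/ b ^ L) b.
rewrite expnSr b_gt0 expn_gt0 b_gt0; nia.
Qed.

Definition in_window (s c k : nat) : bool := (s <= k) && (k < s + c).

Lemma minn_subS s c k : minn (k.+1 - s) c = minn (k - s) c + in_window s c k.
Proof. by rewrite /in_window; case: (leqP s k) => /=; case: (ltnP k (s + c)) => /=; lia. Qed.

Lemma in_window_lt s c k : k < s -> in_window s c k = false.
Proof. by rewrite /in_window ltnNge => /negbTE ->. Qed.

Lemma in_window_ge s c k : s + c <= k -> in_window s c k = false.
Proof. by rewrite /in_window ltnNge => ->; rewrite andbF. Qed.

Definition boundary (T : finType) (f : T -> T) (S : {set T}) := [set v in S | f v \notin S].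

Section CanonicalPaths.
Variables (T C : finType) (D : nat) (F : nat -> T -> T).
Variables (walk : T -> T -> nat -> T) (moves : T -> T -> nat -> bool).
Variable code : nat -> T -> T -> C.
Hypothesis walk0 : forall x y, walk x y 0 = x.
Hypothesis walk_end : forall x y, walk x y D = y.
Hypothesis walkS : forall x y k,
  walk x y k.+1 = if moves x y k then F k (walk x y k) else walk x y k.
Hypothesis walk_code_inj : forall k x y x' y',
  moves x y k -> moves x' y' k -> walk x y k = walk x' y' k ->
  code k x y = code k x' y' -> (x, y) = (x', y').

Definition exits (S : {set T}) k := [set xy in setX S (~: S) |
  (walk xy.1 xy.2 k \in S) && (walk xy.1 xy.2 k.+1 \notin S)].

Lemma exits_moves S k xy : xy \in exits S k -> moves xy.1 xy.2 k.
Proof.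
by rewrite !inE walkS => /and3P [_ walk_in]; case: moves => //; rewrite walk_in.
Qed.

Lemma card_exits S k : #|exits S k| <= #|boundary (F k) S| * #|C|.
Proof.
pose phi xy := (walk xy.1 xy.2 k, code k xy.1 xy.2).
rewrite -cardsT -cardsX -(card_in_imset (f := phi)); last first.
  move=> xy xy' /exits_moves mv /exits_moves mv' [e ec].
  by case: xy xy' mv mv' e ec => [x y] [x' y']; apply: walk_code_inj.
apply: subset_leq_card; apply/subsetP => _ /imsetP [xy xyS ->].
have mv := exits_moves xyS; move: xyS; rewrite !inE walkS mv /= => /and3P [_ walk_in ->].
by rewrite walk_in.
Qed.

Lemma card_cut_le (S : {set T}) g :
  (forall k, k < D -> #|boundary (F k) S| <= g) -> #|S| * #|~: S| <= D * #|C| * g.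
Proof.
move=> bdS; rewrite -cardsX.
have cover : setX S (~: S) \subset \bigcup_(k < D) exits S k.
  apply/subsetP => -[x y]; rewrite !inE /= => /andP [xS yS].
  have [k kD exit_k] : exists2 k, k < D & (walk x y k \in S) && (walk x y k.+1 \notin S).
    by apply: exists_exit; rewrite ?walk0 ?walk_end.
  by apply/bigcupP; exists (Ordinal kD); rewrite // !inE /= xS yS.
apply: leq_trans (subset_leq_card cover) _; apply: leq_trans (card_bigcup_le _ _) _.
have -> : D * #|C| * g = \sum_(k < D) g * #|C| by rewrite sum_nat_const card_ord; lia.
apply: leq_sum => k _; apply: leq_trans (card_exits S k) _.
by rewrite leq_mul2r bdS ?orbT.
Qed.

End CanonicalPaths.

Section Torus.
Variables (r M N : nat).
Hypotheses (r_gt2 : 2 < r) (M_gt0 : 0 < M) (N_gt0 : 0 < N).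

Local Notation B := M.+1.

Lemma double_M_gt0 : 0 < M.*2. Proof. by rewrite double_gt0. Qed.

Definition torus := ('I_M.*2 * 'I_N)%type.

Definition tshift (v : torus) a w : torus :=
  (Ordinal (ltn_pmod (v.1 + a) double_M_gt0), Ordinal (ltn_pmod (v.2 + w) N_gt0)).

Lemma tshift0 v : tshift v 0 0 = v.
Proof. by case: v => a w; congr (_, _); apply: val_inj; rewrite /= addn0 modn_small. Qed.

Lemma tshiftD v a w a' w' : tshift (tshift v a w) a' w' = tshift v (a + a') (w + w').
Proof. by congr (_, _); apply: val_inj; rewrite /= modnDml addnA. Qed.

Lemma tshift_inj a w : injective (fun v => tshift v a w).
Proof.
move=> u u' /(congr1 (fun v : torus => (val v.1, val v.2))) [/eqP eb /eqP ev].
rewrite !eqn_modDr !modn_small ?ltn_ord // in eb ev.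
by rewrite [u]surjective_pairing [u']surjective_pairing (val_inj (eqP eb)) (val_inj (eqP ev)).
Qed.

Definition hi_exp a := if a < M then r - 3 else r - 2.
Definition hi_exp_flip a := if a < M then r - 2 else r - 3.

Definition gen (i : nat) (u : torus) : torus :=
  if i == 0 then u else if i == 1 then tshift u 1 0
  else tshift u 0 (B ^ (if i == r.-1 then hi_exp u.1 else i - 2)).

Lemma gen_inj i : injective (gen i).
Proof.
rewrite /gen; case: (i == 0); first by move=> ? ?.
case: (i == 1); first exact: tshift_inj.
move=> u u' e; have e1 : u.1 = u'.1.
  by move: (congr1 (val \o fst) e) => /=; rewrite !addn0 !modn_small //; apply: val_inj.
by move: e; rewrite e1; apply: tshift_inj.
Qed.

Lemma gen1_neq u : gen 1 u != u.
Proof.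
apply/eqP => /(congr1 (val \o fst)) /=; rewrite addn1.
have := ltn_ord u.1; case: (ltnP u.1.+1 M.*2) => [lt_u _|le_u lt_u].
  by rewrite modn_small // => /esym /n_Sn.
have e : u.1.+1 = M.*2 by lia.
by rewrite e modnn => u0; move: e; rewrite -u0; lia.
Qed.

Lemma hi_exp_flipE a : a < M.*2 -> hi_exp ((a + M) %% M.*2) = hi_exp_flip a.
Proof.
rewrite /hi_exp /hi_exp_flip -addnn => lt_a; case: (ltnP a M) => a_M.
  by rewrite modn_small ?ltnNge ?leq_addl //; lia.
have lt_aM : a - M < M by lia.
by rewrite -(subnK a_M) -addnA modnDr modn_small ?lt_aM //; lia.
Qed.

Definition disp (x y : torus) := (y.2 + N - x.2) %% N.
Definition digit d j := d %/ B ^ j %% B.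
Definition rest (x y : torus) := (y.1 + M.*2 - (x.1 + M) %% M.*2) %% M.*2.

Definition flip_start := (r - 2) * B.
Definition hi_start := flip_start + M.
Definition fin_start := hi_start + B.
Definition plen := fin_start + M.*2.

(* The walk from x to y: on [j B, j B + B), j < r - 3, it applies [gen (j + 2)]
   [digit j] times; on [(r - 3) B, flip_start) it applies [gen (r - 1)] for the
   top digit selected by the half containing x.1; on [flip_start, hi_start) it
   applies [gen 1] M times, changing halves; on [hi_start, fin_start) it applies
   [gen (r - 1)] for the other top digit; from fin_start on it applies [gen 1]
   until the first coordinate is y.1.  [minn (k - s) c] counts the steps of the
   window [s, s + c) before time k. *)
Definition ashift x y k := minn (k - flip_start) M + minn (k - fin_start) (rest x y).

Definition wshift x y k :=
  \sum_(j < r - 3) minn (k - j * B) (digit (disp x y) j) * B ^ j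
  + minn (k - (r - 3) * B) (digit (disp x y) (hi_exp x.1)) * B ^ hi_exp x.1
  + minn (k - hi_start) (digit (disp x y) (hi_exp_flip x.1)) * B ^ hi_exp_flip x.1.

Definition cpath x y k := tshift x (ashift x y k) (wshift x y k).

Definition gen_at k :=
  if k < (r - 3) * B then k %/ B + 2 else if k < flip_start then r.-1
  else if k < hi_start then 1 else if k < fin_start then r.-1 else 1.

Definition moves x y k :=
  if k < (r - 3) * B then in_window (k %/ B * B) (digit (disp x y) (k %/ B)) k
  else if k < flip_start then in_window ((r - 3) * B) (digit (disp x y) (hi_exp x.1)) k
  else if k < hi_start then true
  else if k < fin_start then in_window hi_start (digit (disp x y) (hi_exp_flip x.1)) k
  else in_window fin_start (rest x y) k.

Lemma digit_lt d j : digit d j < B. Proof. by rewrite ltn_mod. Qed.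

Lemma window_starts :
  [/\ flip_start = (r - 3) * B + B, hi_start = flip_start + M
    & fin_start = hi_start + B].
Proof. by split=> //; rewrite /flip_start -mulSnr; congr (_ * _); lia. Qed.

Lemma cpathS x y k :
  cpath x y k.+1 = tshift (cpath x y k)
    (in_window flip_start M k + in_window fin_start (rest x y) k)
    (\sum_(j < r - 3) in_window (j * B) (digit (disp x y) j) k * B ^ j
     + in_window ((r - 3) * B) (digit (disp x y) (hi_exp x.1)) k * B ^ hi_exp x.1
     + in_window hi_start (digit (disp x y) (hi_exp_flip x.1)) k * B ^ hi_exp_flip x.1).
Proof.
rewrite /cpath tshiftD /ashift /wshift !minn_subS.
under eq_bigr => j _ do rewrite minn_subS mulnDl.
by rewrite big_split /=; congr tshift; lia.
Qed.

Lemma plain_shift0 d k : (r - 3) * B <= k ->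
  \sum_(j < r - 3) in_window (j * B) (digit d j) k * B ^ j = 0.
Proof.
move=> le_k; rewrite big1 // => j _; rewrite in_window_ge //.
by have := digit_lt d j; have := ltn_ord j; nia.
Qed.

Lemma plain_shift d k (j := k %/ B) : k < (r - 3) * B ->
  \sum_(i < r - 3) in_window (i * B) (digit d i) k * B ^ i
  = in_window (j * B) (digit d j) k * B ^ j.
Proof.
rewrite -ltn_divLR // => lt_j; rewrite (bigD1 (Ordinal lt_j)) //= big1 ?addn0 // => i ne_i.
have {}ne_i : i != j :> nat by apply: contra ne_i => /eqP e; apply/eqP/val_inj.
have := digit_lt d i; have := ltn_mod k B; have := divn_eq k B; rewrite -/j => kE *.
case: (ltngtP i j) ne_i => // i_j _.
  by rewrite in_window_ge //; nia.
by rewrite in_window_lt //; nia.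
Qed.

Lemma ashift0 x y k : k <= flip_start -> ashift x y k = 0.
Proof. by rewrite /ashift /fin_start /hi_start; lia. Qed.

Lemma ashiftM x y k : hi_start <= k <= fin_start -> ashift x y k = M.
Proof. by rewrite /ashift /fin_start /hi_start; lia. Qed.

Lemma gen_plainE i u : 1 < i < r.-1 -> gen i u = tshift u 0 (B ^ (i - 2)).
Proof. by move=> /andP [i1 ir]; rewrite /gen !ifN_eq //; lia. Qed.

Lemma gen_topE u : gen r.-1 u = tshift u 0 (B ^ hi_exp u.1).
Proof. by rewrite /gen eqxx !ifN_eq //; lia. Qed.

Lemma cpath_fst0 x y k : k <= flip_start -> (cpath x y k).1 = x.1.
Proof. by move=> le_k; apply: val_inj; rewrite /= ashift0 // addn0 modn_small. Qed.

Lemma cpath_fstM x y k :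
  hi_start <= k <= fin_start -> val (cpath x y k).1 = (x.1 + M) %% M.*2.
Proof. by move=> le_k; rewrite /= ashiftM. Qed.

Lemma cpathS_plain x y k : k < (r - 3) * B ->
  cpath x y k.+1 =
  if in_window (k %/ B * B) (digit (disp x y) (k %/ B)) k
  then gen (k %/ B + 2) (cpath x y k) else cpath x y k.
Proof.
move=> lt_k; set j := k %/ B; have lt_j : j < r - 3 by rewrite ltn_divLR.
have [fs hs fin] := window_starts; rewrite cpathS plain_shift //.
rewrite (in_window_lt (s := flip_start)) ?(in_window_lt (s := fin_start))
  ?(in_window_lt (s := (r - 3) * B)) ?(in_window_lt (s := hi_start)) //; try lia.
rewrite !mul0n !addn0; case: in_window; rewrite ?mul0n ?tshift0 // mul1n.
by rewrite gen_plainE ?addnK //; lia.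
Qed.

Lemma cpathS_hi x y k : (r - 3) * B <= k < flip_start ->
  cpath x y k.+1 =
  if in_window ((r - 3) * B) (digit (disp x y) (hi_exp x.1)) k
  then gen r.-1 (cpath x y k) else cpath x y k.
Proof.
move=> /andP [ge_k lt_k]; have [fs hs fin] := window_starts.
rewrite cpathS plain_shift0 // (in_window_lt (s := flip_start))
  ?(in_window_lt (s := fin_start)) ?(in_window_lt (s := hi_start)) //; try lia.
rewrite !mul0n !addn0 add0n; case: in_window; rewrite ?mul0n ?tshift0 // mul1n.
by rewrite gen_topE cpath_fst0 // ltnW.
Qed.

Lemma cpathS_flip x y k : flip_start <= k < hi_start ->
  cpath x y k.+1 = gen 1 (cpath x y k).
Proof.
move=> /andP [ge_k lt_k]; have [fs hs fin] := window_starts.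
have := digit_lt (disp x y) (hi_exp x.1) => dB.
rewrite cpathS plain_shift0 ?(in_window_ge (s := (r - 3) * B))
  ?(in_window_lt (s := fin_start)) ?(in_window_lt (s := hi_start)) //; try lia.
by rewrite /in_window ge_k -hs lt_k !mul0n.
Qed.

Lemma cpathS_hi_flip x y k : hi_start <= k < fin_start ->
  cpath x y k.+1 =
  if in_window hi_start (digit (disp x y) (hi_exp_flip x.1)) k
  then gen r.-1 (cpath x y k) else cpath x y k.
Proof.
move=> /andP [ge_k lt_k]; have [fs hs fin] := window_starts.
have := digit_lt (disp x y) (hi_exp x.1) => dB.
rewrite cpathS plain_shift0 ?(in_window_ge (s := (r - 3) * B))
  ?(in_window_ge (s := flip_start)) ?(in_window_lt (s := fin_start)) //; try lia.
rewrite !mul0n !add0n; case: in_window; rewrite ?mul0n ?tshift0 // mul1n.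
rewrite gen_topE; congr (tshift _ _ (B ^ _)).
have k_in : hi_start <= k <= fin_start by rewrite ge_k ltnW.
by rewrite cpath_fstM // hi_exp_flipE.
Qed.

Lemma cpathS_fin x y k : fin_start <= k ->
  cpath x y k.+1 =
  if in_window fin_start (rest x y) k then gen 1 (cpath x y k) else cpath x y k.
Proof.
move=> ge_k; have [fs hs fin] := window_starts.
have := digit_lt (disp x y) (hi_exp x.1); have := digit_lt (disp x y) (hi_exp_flip x.1).
move=> dB dB'; rewrite cpathS plain_shift0 ?(in_window_ge (s := (r - 3) * B))
  ?(in_window_ge (s := flip_start)) ?(in_window_ge (s := hi_start)) //; try lia.
by rewrite !mul0n !addn0; case: in_window; rewrite ?tshift0.
Qed.

Lemma cpath_step x y k :
  cpath x y k.+1 = if moves x y k then gen (gen_at k) (cpath x y k) else cpath x y k.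
Proof.
rewrite /moves /gen_at; have [lt_k|ge_k] := ltnP k ((r - 3) * B).
  exact: cpathS_plain.
have [lt_fs|ge_fs] := ltnP k flip_start; first by apply: cpathS_hi; rewrite ge_k.
have [lt_hs|ge_hs] := ltnP k hi_start; first by apply: cpathS_flip; rewrite ge_fs.
have [lt_fin|ge_fin] := ltnP k fin_start; first by apply: cpathS_hi_flip; rewrite ge_hs.
exact: cpathS_fin.
Qed.

Lemma cpath0 x y : cpath x y 0 = x.
Proof.
rewrite /cpath ashift0 // /wshift big1 => [|j _]; last by rewrite sub0n min0n mul0n.
by rewrite !sub0n !min0n !mul0n tshift0.
Qed.

Lemma disp_lt x y : disp x y < N. Proof. by rewrite ltn_mod. Qed.

Lemma disp_correct (x y : torus) : (x.2 + disp x y) %% N = y.2.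
Proof.
rewrite /disp modnDmr; have -> : x.2 + (y.2 + N - x.2) = y.2 + N.
  by have := ltn_ord x.2; lia.
by rewrite modnDr modn_small.
Qed.

Hypothesis N_le : N <= B ^ r.-1.

Lemma wshift_end x y : wshift x y plen = disp x y.
Proof.
have [fs hs fin] := window_starts; have dB := digit_lt (disp x y).
have plen_ge : fin_start <= plen by rewrite /plen leq_addr.
rewrite /wshift (eq_bigr (fun j : 'I_(r - 3) => digit (disp x y) j * B ^ j)); last first.
  by move=> j _; congr (_ * _); apply/minn_idPr; have := dB j; have := ltn_ord j; nia.
rewrite !(minn_idPr _) ?leq_subRL; try by have := dB (hi_exp x.1);
  have := dB (hi_exp_flip x.1); nia.
have r_eq : r.-1 = (r - 3).+2 by lia.
rewrite -[RHS](@modn_small _ (B ^ r.-1)) ?(leq_trans (disp_lt x y)) //.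
rewrite modn_expn_digits // r_eq !big_ord_recr /= -!addnA; congr (_ + _).
rewrite /hi_exp /hi_exp_flip; have -> : (r - 3).+1 = r - 2 by lia.
by case: (x.1 < M); rewrite // addnC.
Qed.

Lemma cpath_end x y : cpath x y plen = y.
Proof.
have rest_lt : rest x y < M.*2 by rewrite ltn_mod double_M_gt0.
have aE : ashift x y plen = M + rest x y.
  by rewrite /ashift /plen /fin_start /hi_start; lia.
rewrite /cpath aE wshift_end [y in RHS]surjective_pairing; congr (_, _); apply: val_inj.
  rewrite /= addnA -modnDml /rest modnDmr.
  have := ltn_ord y.1; have := ltn_mod (x.1 + M) M.*2; rewrite double_M_gt0 => *.
  have -> : (x.1 + M) %% M.*2 + (y.1 + M.*2 - (x.1 + M) %% M.*2) = y.1 + M.*2 by lia.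
  by rewrite modnDr modn_small.
exact: disp_correct.
Qed.

Lemma ashift_moves x y k :
  moves x y k -> ashift x y k = minn (k - flip_start) M + (k - fin_start).
Proof.
have [fs hs fin] := window_starts; rewrite /ashift /moves.
have [lt_fin|ge_fin] := ltnP k fin_start; first by move=> _; lia.
rewrite !ifN -?leqNgt; try lia.
by rewrite /in_window => /andP [_ lt_k]; lia.
Qed.

(* A moving step has a first-coordinate shift independent of y: the position
   then recovers x.1, hence x, hence y from y.1 and the displacement. *)
Lemma cpath_code_inj k x y x' y' :
  moves x y k -> moves x' y' k -> cpath x y k = cpath x' y' k ->
  (y.1, Ordinal (disp_lt x y)) = (y'.1, Ordinal (disp_lt x' y')) -> (x, y) = (x', y').
Proof.
move=> mv mv' e [e1 ed].
have ex1 : x.1 = x'.1.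
  move: (congr1 (val \o fst) e); rewrite /= (ashift_moves mv) (ashift_moves mv').
  by move/eqP; rewrite eqn_modDr !modn_small // => /eqP /val_inj.
have ex : x = x'.
  apply: (@tshift_inj (ashift x y k) (wshift x y k)); rewrite -/(cpath x y k) e.
  by rewrite /cpath /ashift /wshift /rest ex1 e1 ed.
have ey2 : y.2 = y'.2.
  by apply: val_inj; rewrite /= -(disp_correct x y) ed -(disp_correct x' y') ex.
by rewrite ex [y]surjective_pairing [y']surjective_pairing e1 ey2.
Qed.

Lemma gen_at_range k : 0 < gen_at k < r.
Proof.
rewrite /gen_at; case: ifP => [lt_k|_]; last by repeat case: ifP => _; lia.
have : k %/ B < r - 3 by rewrite ltn_divLR.
move: (k %/ B) => j; lia.
Qed.

Theorem torus_expansion (S : {set torus}) g :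
  (forall i, 0 < i < r -> #|boundary (gen i) S| <= g) ->
  #|S| * #|~: S| <= plen * (M.*2 * N) * g.
Proof.
move=> bdS; have <- : #|{: torus}| = M.*2 * N by rewrite card_prod !card_ord.
apply: (card_cut_le (F := fun k => gen (gen_at k)) (moves := moves)
  (code := fun _ x y => (y.1, Ordinal (disp_lt x y)) : torus)).
- exact: cpath0.
- exact: cpath_end.
- exact: cpath_step.
- exact: cpath_code_inj.
- by move=> k _; apply/bdS/gen_at_range.
Qed.

End Torus.

Lemma plen_le r M : 2 < r -> 5 < M -> 9 * plen r M <= 16 * (r * M).
Proof.
move=> r_gt2 M_gt5; rewrite /plen /fin_start /hi_start /flip_start.
have [k ->] : exists k, r = k + 3 by exists (r - 3); lia.
have [m ->] : exists m, M = m + 6 by exists (M - 6); lia.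
have -> : k + 3 - 2 = k.+1 by lia.
nia.
Qed.

Lemma leq_center_mul X m s :
  m <= X -> X <= s <= X + m -> X * (X - m) <= s * (2 * X - s).
Proof.
move=> le_mX /andP [le_Xs le_s].
have [t st] : exists t, s = X + t by exists (s - X); lia.
have [u eX] : exists u, X = m + u by exists (X - m); lia.
have [w em] : exists w, m = t + w by exists (m - t); lia.
subst s X m; have -> : t + w + u - (t + w) = u by lia.
have -> : 2 * (t + w + u) - (t + w + u + t) = w + u by lia.
nia.
Qed.

Section Construction.
Variables (n r M : nat).
Hypotheses (r_gt2 : 2 < r) (M_gt5 : 5 < M) (Mr_le : M ^ r <= n) (Mr_gt : n < M.+1 ^ r).

Definition excess := n %/ (12 * r * M).
Definition msize := n + excess.
Definition Nt := msize %/ M.*2.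
Definition pad := msize %% M.*2.
Definition numB := Nt * M + pad.
Definition numA := n - numB.

Lemma M_pos : 0 < M. Proof. lia. Qed.

Lemma n_ge_36M : 36 * M <= n.
Proof.
apply: leq_trans Mr_le; apply: leq_trans (leq_pexp2l M_pos (_ : 3 <= r)) => //.
by rewrite !expnS expn0 muln1 mulnA leq_mul2r (leq_mul M_gt5 M_gt5) orbT.
Qed.

Lemma excess_le : 12 * r * M * excess <= n.
Proof. by rewrite mulnC leq_divM. Qed.

Lemma n_lt_excessS : n < 12 * r * M * excess.+1.
Proof. by rewrite /excess mulnC ltn_ceil // !muln_gt0 M_pos; lia. Qed.

Lemma msizeE : msize = M.*2 * Nt + pad.
Proof. by rewrite /Nt /pad mulnC -divn_eq. Qed.

Lemma pad_lt : pad < M.*2.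
Proof. by rewrite /pad ltn_mod double_gt0 M_pos. Qed.

Lemma numB_le : numB <= n.
Proof.
have := msizeE; have := excess_le; have := n_ge_36M; have := pad_lt.
have rM : 36 * 6 <= 12 * r * M by apply: leq_mul; lia.
have : 216 * excess <= 12 * r * M * excess by rewrite leq_mul2r rM orbT.
by rewrite /numB /msize; lia.
Qed.

Lemma Nt_gt0 : 0 < Nt.
Proof. by rewrite /Nt divn_gt0 ?double_gt0 ?M_pos //; have := n_ge_36M; rewrite /msize; lia. Qed.

Lemma Nt_le : Nt <= M.+1 ^ r.-1.
Proof.
set X := M.+1 ^ r.-1.
have Nt_msize : Nt * M.*2 <= msize by rewrite /Nt leq_divM.
have msize_n : msize * M <= n * M.+1.
  have := excess_le; rewrite /msize mulnDl mulnS.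
  have : M * excess <= 12 * r * (M * excess) by rewrite leq_pmull //; lia.
  lia.
have n_X : n * M.+1 < X * (M.+1 * M.+1).
  by rewrite mulnA ltn_pmul2r // mulnC /X -expnS prednK //; lia.
have BB : M.+1 * M.+1 <= 2 * (M * M).
  have [k ->] : exists k, M = k + 6 by exists (M - 6); lia.
  nia.
have NtM := leq_mul Nt_msize (leqnn M); have BBX := leq_mul BB (leqnn X).
have : Nt * (2 * (M * M)) < X * (2 * (M * M)) by lia.
by rewrite ltn_pmul2r ?muln_gt0 ?M_pos // => /ltnW.
Qed.

Local Notation U := (torus M Nt).
Local Notation gen := (gen r M_pos Nt_gt0).

(* Each part of the hypergraph is a copy of [vertex]: the slots, plus [pad]
   vertices that occur only in part 1, in the B-edges of the padding slots. *)
Definition slot := (U + 'I_pad)%type.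
Definition vertex := (slot + 'I_pad)%type.
Definition nvertex := #|{: vertex}|.

Definition vertexB (i : 'I_r) (x : slot) : vertex :=
  match x with
  | inl u => inl (inl (gen i u))
  | inr z => if i == 1 :> nat then inr z else inl (inr z)
  end.

Definition edgeA (y : slot) : edge r nvertex := [ffun => enum_rank (inl y : vertex)].
Definition edgeB (x : slot) : edge r nvertex := [ffun i => enum_rank (vertexB i x)].

Definition SA := edgeA @: setT.
Definition SB := edgeB @: setT.
Definition Ms (i : 'I_n) := if i < numA then SA else SB.

Lemma r_gt0 : 0 < r. Proof. lia. Qed.
Lemma r_gt1 : 1 < r. Proof. lia. Qed.
Definition part0 : 'I_r := Ordinal r_gt0.
Definition part1 : 'I_r := Ordinal r_gt1.
Local Notation at_part i := (fun e : edge r nvertex => e i).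

Lemma vertexB0 x :
  vertexB part0 x = match x with inl u => inl (inl u) | inr z => inl (inr z) end.
Proof. by case: x. Qed.

Lemma edgeA_inj : injective edgeA.
Proof. by move=> y y' /(congr1 (at_part part0)); rewrite !ffunE => /enum_rank_inj [->]. Qed.

Lemma edgeB_inj : injective edgeB.
Proof.
move=> x x' /(congr1 (at_part part0)); rewrite !ffunE => /enum_rank_inj.
by rewrite !vertexB0; case: x x' => [u|z] [u'|z'] // [->].
Qed.

Lemma edgeA_neq_edgeB y x : edgeA y != edgeB x.
Proof.
apply/eqP => e; have := congr1 (at_part part0) e; have := congr1 (at_part part1) e.
rewrite !ffunE => /enum_rank_inj -> /enum_rank_inj; rewrite vertexB0.
by case: x {e} => [u [] /eqP|z] //=; rewrite (negbTE (gen1_neq _ _ _ u)).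
Qed.

Lemma SA_matching : is_matching SA.
Proof.
move=> _ _ /imsetP [y _ ->] /imsetP [y' _ ->] ne i; rewrite !ffunE.
by move/enum_rank_inj => [ey]; apply: ne; rewrite ey.
Qed.

Lemma SB_matching : is_matching SB.
Proof.
move=> _ _ /imsetP [x _ ->] /imsetP [x' _ ->] ne i; rewrite !ffunE.
move/enum_rank_inj => e; apply: ne; congr edgeB.
case: x x' e => [u|z] [u'|z'] /=; try by case: ifP.
  by move=> [] /gen_inj ->.
by case: ifP => _ [->].
Qed.

Lemma card_slot : #|{: slot}| = msize.
Proof. by rewrite card_sum card_prod !card_ord msizeE. Qed.

Lemma card_SA : #|SA| = msize.
Proof. by rewrite card_imset ?cardsT ?card_slot //; apply: edgeA_inj. Qed.

Lemma card_SB : #|SB| = msize.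
Proof. by rewrite card_imset ?cardsT ?card_slot //; apply: edgeB_inj. Qed.

Lemma disjoint_SA_SB : [disjoint SA & SB].
Proof.
rewrite -setI_eq0; apply/eqP/setP => e; rewrite !inE.
by apply/andP => -[/imsetP [y _ ->] /imsetP [x _ /eqP]]; rewrite (negbTE (edgeA_neq_edgeB y x)).
Qed.

Lemma rainbow_index_cards E :
  is_rainbow Ms E -> #|E| = n -> #|edgeA @^-1: E| = numA /\ #|edgeB @^-1: E| = numB.
Proof.
case=> _ [phi [phi_inj phi_in]] card_E.
have [cA cB] := rainbow_card_split (leq_subr numB n) disjoint_SA_SB phi_inj card_E phi_in.
rewrite !card_preimset_inj ?cA ?cB; [|exact: edgeB_inj|exact: edgeA_inj].
by rewrite /numA subKn ?numB_le.
Qed.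

Lemma rainbow_boundary_le_excess (X Y : {set slot}) :
  #|Y| = numA -> #|X| = numB ->
  (forall x y i, x \in X -> y \in Y -> edgeA y i <> edgeB x i) ->
  #|(\bigcup_(i < r) gen i @: (inl @^-1: X)) :\: (inl @^-1: X)| <= excess.
Proof.
move=> cY cX avoid; set SU := inl @^-1: X; set G := \bigcup_(i < r) _.
pose NX := [set v : slot | if v is inl u then u \in G else v \in X].
have YNX : Y \subset ~: NX.
  apply/subsetP => -[u|z] yY; rewrite !inE; apply/negP.
    case/bigcupP => i _ /imsetP [u0 u0S eu]; rewrite inE in u0S.
    by apply: (avoid _ _ i u0S yY); rewrite !ffunE eu.
  by move=> zX; apply: (avoid _ _ part0 zX yY); rewrite !ffunE vertexB0.
have cNX : #|NX| = #|G| + #|inr @^-1: X|.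
  by rewrite card_set_sum; congr (_ + _); apply: eq_card => v; rewrite !inE.
have SUG : SU \subset G.
  by apply/subsetP => u uS; apply/bigcupP; exists part0 => //; apply/imsetP; exists u.
have cG : #|G| = #|SU| + #|G :\: SU| by rewrite -(cardsID SU G) (setIidPr SUG).
have : #|Y| + #|NX| <= msize.
  by rewrite -card_slot -(cardsC NX) addnC leq_add2l subset_leq_card.
have cXs : #|X| = #|SU| + #|inr @^-1: X| := card_set_sum X.
rewrite cY cNX cG /numA /msize; rewrite cX in cXs.
by have := numB_le; lia.
Qed.

Lemma cut_exceeds_congestion s g :
  Nt * M <= s <= Nt * M + pad -> g <= excess ->
  ~ s * (M.*2 * Nt - s) <= plen r M * (M.*2 * Nt) * g.
Proof.
set X := Nt * M => s_bounds g_le cut.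
have XE : M.*2 * Nt = 2 * X by rewrite /X; lia.
have := msizeE; have := pad_lt; have := n_ge_36M; have := excess_le.
rewrite XE /msize in cut * => *.
have pad_X : pad <= X by lia.
have : X * (X - pad) <= X * (2 * (plen r M * excess)).
  apply: leq_trans (leq_center_mul pad_X s_bounds) _; apply: leq_trans cut _.
  by have := leq_mul (leqnn (plen r M * (2 * X))) g_le; lia.
rewrite leq_pmul2l ?muln_gt0 ?Nt_gt0 ?M_pos //.
have : 9 * plen r M * excess <= 16 * (r * M) * excess by rewrite leq_mul2r plen_le ?orbT.
lia.
Qed.

Lemma torus_boundary_gt_excess (S : {set U}) :
  Nt * M <= #|S| <= Nt * M + pad -> excess < #|(\bigcup_(i < r) gen i @: S) :\: S|.
Proof.
move=> S_bounds; rewrite ltnNge; apply/negP => g_le.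
apply: (cut_exceeds_congestion S_bounds g_le).
have <- : #|~: S| = M.*2 * Nt - #|S|.
  by have := cardsC S; rewrite card_prod !card_ord; lia.
apply: (@torus_expansion r M Nt r_gt2 M_pos Nt_gt0 Nt_le) => i /andP [_ lt_ir].
rewrite -(card_imset _ (@gen_inj r M Nt M_pos Nt_gt0 i)); apply: subset_leq_card.
apply/subsetP => _ /imsetP [v + ->]; rewrite !inE => /andP [vS gvS]; rewrite gvS.
by apply/bigcupP; exists (Ordinal lt_ir) => //; apply: imset_f.
Qed.

Lemma no_rainbow E : is_rainbow Ms E -> #|E| = n -> False.
Proof.
move=> rainbow_E card_E; have [cY cX] := rainbow_index_cards rainbow_E card_E.
have avoid (x y : slot) i : x \in edgeB @^-1: E -> y \in edgeA @^-1: E -> edgeA y i <> edgeB x i.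
  by rewrite !inE => xE yE; apply: rainbow_E.1 => //; apply/eqP/edgeA_neq_edgeB.
have := rainbow_boundary_le_excess cY cX avoid; rewrite leqNgt torus_boundary_gt_excess //.
set X := edgeB @^-1: E in cX *.
have cXs : #|X| = #|inl @^-1: X| + #|inr @^-1: X| := card_set_sum X.
have Z_le : #|inr @^-1: X| <= pad by apply: leq_trans (max_card _) _; rewrite card_ord.
suff -> : Nt * M <= #|inl @^-1: X| <= Nt * M + pad by [].
by rewrite cXs /numB in cX; lia.
Qed.

Theorem rainbow_free_family :
  exists (N : nat) (H : {set edge r N}) (Ms : 'I_n -> {set edge r N}),
    (forall i, [/\ Ms i \subset H, is_matching (Ms i) & #|Ms i| = n + excess])
    /\ ~ (exists E, is_rainbow Ms E /\ #|E| = n).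
Proof.
exists nvertex, (SA :|: SB), Ms; split; last by case=> E [rainbow_E /(no_rainbow rainbow_E)].
move=> i; rewrite /Ms; case: ifP => _.
  by rewrite subsetUl card_SA; split=> //; exact: SA_matching.
by rewrite subsetUr card_SB; split=> //; exact: SB_matching.
Qed.

End Construction.

Lemma exists_iroot n r : 0 < r -> exists M, M ^ r <= n < M.+1 ^ r.
Proof.
move=> r_gt0; elim: n => [|n [M /andP [le_n lt_n]]]; first by exists 0; rewrite exp0n // exp1n.
have [le_Sn|lt_Sn] := leqP (M.+1 ^ r) n.+1; last by exists M; rewrite lt_Sn andbT leqW.
exists M.+1; rewrite le_Sn; have -> : n.+1 = M.+1 ^ r by apply/eqP; rewrite eqn_leq lt_n le_Sn.
by rewrite ltn_exp2r // ltnSn.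
Qed.

Lemma natpowE m k : Nat.pow m k = m ^ k.
Proof. by elim: k => //= k ->; rewrite expnS. Qed.

(* Imported only here: it rebinds [^] on nat to [Nat.pow], shadowing [expn]. *)
From Stdlib Require Import Reals Lra.

Lemma Rpower_inv_ge (x m : R) (r : nat) :
  (0 < r)%N -> (0 < m)%R -> (m ^ r <= x)%R -> (m <= Rpower x (/ INR r))%R.
Proof.
move=> r_gt0 m_gt0 le_x.
have r_pos : (0 < INR r)%R by apply: lt_0_INR; apply/ltP.
rewrite -[m in (m <= _)%R](Rpower_1 m) // -(Rinv_r (INR r)); last lra.
rewrite -Rpower_mult Rpower_pow //.
by apply: Rle_Rpower_l; [left; apply: Rinv_0_lt_compat | split; [apply: pow_lt|]].
Qed.

Lemma Rpower_split (x : R) (r : nat) : (0 < r)%N -> (0 < x)%R ->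
  (Rpower x ((INR r - 1) / INR r) * Rpower x (/ INR r) = x)%R.
Proof.
move=> r_gt0 x_gt0; have r_pos : (0 < INR r)%R by apply: lt_0_INR; apply/ltP.
by rewrite -Rpower_plus -{2}(Rpower_1 x) //; congr Rpower; field; lra.
Qed.

Lemma size_ge_real_bound (n r M q : nat) :
  (0 < r)%N -> (0 < M)%N -> (INR M ^ r <= INR n)%R -> (n < 12 * r * M * q.+1)%N ->
  (INR (n + q) >= INR n + / (12 * INR r) * Rpower (INR n) ((INR r - 1) / INR r) - 1)%R.
Proof.
move=> r_gt0 M_gt0 Mr_le n_lt.
have r_pos : (0 < INR r)%R by apply: lt_0_INR; apply/ltP.
have M_pos : (0 < INR M)%R by apply: lt_0_INR; apply/ltP.
have n_pos : (0 < INR n)%R by have := pow_lt _ r M_pos; lra.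
have M_le := Rpower_inv_ge r_gt0 M_pos Mr_le.
have nE := Rpower_split r_gt0 n_pos.
set P := Rpower (INR n) _ in nE *.
have P_pos : (0 < P)%R by apply: exp_pos.
have n_ltR : (INR n < 12 * INR r * INR M * (INR q + 1))%R.
  have := lt_INR _ _ (ltP n_lt); rewrite -!multE !mult_INR S_INR.
  have -> : (INR 11 + 1 = 12)%R by rewrite INR_IZR_INZ /=; lra.
  by rewrite S_INR.
have : (P * INR M <= INR n)%R by rewrite -nE; apply: Rmult_le_compat_l; lra.
have : (/ (12 * INR r) * P <= INR q + 1)%R.
  apply: (Rmult_le_reg_l (12 * INR r * INR M)); first by nra.
  have -> : (12 * INR r * INR M * (/ (12 * INR r) * P) = P * INR M)%R by field; lra.
  nra.
rewrite plus_INR; lra.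
Qed.

Theorem theorem2p5 (r n : nat) :
  (3 <= r)%N -> (6 ^ r < n)%N ->
  exists (N : nat) (H : {set edge r N}) (Ms : 'I_n -> {set edge r N}),
    (forall i : 'I_n,
        Ms i \subset H /\ is_matching (Ms i) /\
        (INR #|Ms i| >= INR n + / (12 * INR r) * Rpower (INR n) ((INR r - 1) / INR r) - 1)%R)
    /\ ~ (exists M : {set edge r N}, is_rainbow Ms M /\ #|M| = n).
Proof.
move=> r_ge3 n_gt; rewrite natpowE in n_gt.
have r_gt0 : (0 < r)%N by apply: leq_trans r_ge3.
have [M /andP [Mr_le Mr_gt]] := exists_iroot n r_gt0.
have M_gt5 : (5 < M)%N.
  by rewrite -ltnS -(ltn_exp2r _ _ r_gt0) (ltn_trans n_gt Mr_gt).
have [N [H [Ms [Ms_ok no_rainbow]]]] := rainbow_free_family r_ge3 M_gt5 Mr_le Mr_gt.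
exists N, H, Ms; split=> // i; have [sub_H matching_i ->] := Ms_ok i.
do 2!split=> //; apply: (@size_ge_real_bound n r M); [lia|lia| |exact: n_lt_excessS].
by rewrite -pow_INR natpowE; apply/le_INR/leP.
Qed.
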